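(* Let $P=(N,L)$ be a filtration pair for $f$ (for some isolated invariant set), let $N_L=N/L$ be the quotient space in which $L$ is collapsed to a point $[L]$ taken as base point (if $L=\emptyset$, $N_L$ is the disjoint union of $N$ and a single point $[L]$), and let $p:N\to N_L$ be the quotient map. Then the map $f_P:N_L\to N_L$ given by $f_P([L])=[L]$ and $f_P(p(x))=p(f(x))$ for $x\in N\setminus L$ is a well-defined continuous base-point preserving map, and $[L]\in\operatorname{Int} f_P^{-1}([L])$.
   Context: Let $X$ be a locally compact metric space, $U\subset X$ open and $f:U\to X$ continuous. For $N\subset U$, a solution through $x$ is a map $\sigma:\mathbb Z\to U$ with $\sigma(0)=x$ and $f(\sigma(n))=\sigma(n+1)$ for all $n$; $\operatorname{Inv} N$ is the set of $x\in N$ admitting a solution through $x$ with all values in $N$. A compact set $N\subset U$ is an isolating neighborhood if $\operatorname{Inv} N\subset\operatorname{Int} N$; a set $S$ is an isolated invariant set if $S=\operatorname{Inv} N$ for some isolating neighborhood $N$. The exit set of $N$ is $N^-=\{x\in N: f(x)\notin\operatorname{Int} N\}$. A filtration pair for an isolated invariant set $S$ is a pair of compact sets $L\subset N$ contained in the interior of the domain of $f$, each equal to the closure of its interior, such that (1) $\operatorname{cl}(N\setminus L)$ is an isolating neighborhood with $\operatorname{Inv}\operatorname{cl}(N\setminus L)=S$; (2) $L$ is a neighborhood of $N^-$ in $N$; (3) $f(L)\cap\operatorname{cl}(N\setminus L)=\emptyset$. *)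

From HB Require Import structures.
From mathcomp Require Import all_boot all_order all_algebra.
From mathcomp Require Import all_classical all_reals all_analysis.
Set Implicit Arguments. Unset Strict Implicit. Unset Printing Implicit Defensive.
Import Order.TTheory GRing.Theory Num.Theory.
Local Open Scope classical_set_scope.
Local Open Scope ring_scope.

Section Conley.
Context {R : realType} {X : metricType R}.

(* f : U -> X is modelled as a total map X -> X, only its values on U matter. *)

Definition solution_in (U : set X) (f : X -> X) (A : set X) (sigma : int -> X) (x : X) :=
  sigma 0 = x /\ (forall n : int, U (sigma n) /\ A (sigma n) /\ f (sigma n) = sigma (n + 1)).

Definition Inv (U : set X) (f : X -> X) (N : set X) : set X :=
  [set x | N x /\ exists sigma, solution_in U f N sigma x].

Definition isolating_neighborhood (U : set X) (f : X -> X) (N : set X) :=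
  compact N /\ N `<=` U /\ Inv U f N `<=` interior N.

Definition isolated_invariant_set (U : set X) (f : X -> X) (S : set X) :=
  exists N, isolating_neighborhood U f N /\ S = Inv U f N.

Definition exit_set (f : X -> X) (N : set X) : set X :=
  [set x | N x /\ ~ (interior N) (f x)].

Definition filtration_pair (U : set X) (f : X -> X) (S N L : set X) :=
  compact N /\ compact L /\ L `<=` N /\ N `<=` interior U /\
  closure (interior N) = N /\ closure (interior L) = L /\
  isolating_neighborhood U f (closure (N `\` L)) /\
  Inv U f (closure (N `\` L)) = S /\
  (* (2) L is a neighborhood of N^- relative to N *)
  (exists O : set X, open O /\ exit_set f N `<=` O /\ O `&` N `<=` L) /\
  (f @` L) `&` closure (N `\` L) = set0.

(* The pointed quotient N_L = N/L: the points of N \ L together with a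
   base point [L] = None. *)
Definition quot (N L : set X) := option {x : X | (N `\` L) x}.

(* the quotient map p : N -> N_L (defined on all of X, used only on N) *)
Definition qmap (N L : set X) (x : X) : quot N L :=
  match pselect ((N `\` L) x) with
  | left h => Some (exist _ x h)
  | right _ => None
  end.

(* quotient topology: V is open iff p^{-1}(V) is open in N (subspace topology) *)
Definition quot_open (N L : set X) (V : set (quot N L)) :=
  exists O : set X, open O /\ N `&` (qmap N L @^-1` V) = N `&` O.

Definition quot_continuous (N L : set X) (g : quot N L -> quot N L) :=
  forall V, quot_open V -> quot_open (g @^-1` V).

Definition quot_interior (N L : set X) (A : set (quot N L)) : set (quot N L) :=
  [set y | exists W, quot_open W /\ W y /\ W `<=` A].

End Conley.

From HB Require Import structures.
From mathcomp Require Import all_boot all_order all_algebra.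
From mathcomp Require Import all_classical all_reals all_analysis.
Local Open Scope classical_set_scope.

(* A point of [N \ L] cannot leave [Int N] under [f]: it would lie in the exit
   set, hence in [L].  Condition (3) says that [f] maps [L] into the open set
   [X \ cl (N \ L)], which [p] collapses to [[L]], and by continuity this
   persists near every point of [L].  So [f_P o p] is [p o f] near points of
   [N \ L] and constantly [[L]] near points of [L]; this gives continuity, and
   the classes of the points sent off [cl (N \ L)] form an open neighbourhood
   of [[L]] inside [f_P^-1 [L]]. *)

Lemma subspace_open_of_nbhs {T : topologicalType} (N A : set T) :
  (forall x, N x -> A x -> \forall y \near x, N y -> A y) ->
  exists O, open O /\ N `&` A = N `&` O.
Proof.
move=> nbhsA; exists (interior [set y | N y -> A y]).
split; first exact: open_interior.
apply/seteqP; split=> x [Nx Ax]; split=> //; first exact: nbhsA.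
exact: interior_subset Ax Nx.
Qed.

Lemma near_continuous_open {T T' : topologicalType} {g : T -> T'} {x} {A : set T'} :
  {for x, continuous g} -> open A -> A (g x) -> \forall y \near x, A (g y).
Proof.
by move=> gx oA Agx; have : nbhs x (g @^-1` A) by apply/gx/open_nbhs_nbhs.
Qed.

Section QuotientMap.
Context {R : realType} {X : metricType R} {N L : set X}.

Local Notation p := (qmap N L).

Lemma qmap_in {y} (NLy : (N `\` L) y) : p y = Some (exist _ y NLy).
Proof.
rewrite /qmap; case: pselect => // NLy'.
by congr Some; congr exist; exact: Prop_irrelevance.
Qed.

Lemma qmap_out y : ~ (N `\` L) y -> p y = None.
Proof. by rewrite /qmap; case: pselect. Qed.

Lemma qmap_out_closure y : ~ closure (N `\` L) y -> p y = None.
Proof. by move=> notCy; apply: qmap_out => NLy; apply/notCy/subset_closure. Qed.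

Definition quot_lift (g : X -> X) (q : quot N L) : quot N L :=
  if q is Some x then p (g (sval x)) else None.

Lemma quot_lift_qmap_in g y : (N `\` L) y -> quot_lift g (p y) = p (g y).
Proof. by move=> NLy; rewrite (qmap_in NLy). Qed.

Lemma quot_lift_qmap_out g y : ~ (N `\` L) y -> quot_lift g (p y) = None.
Proof. by move=> NLy; rewrite qmap_out. Qed.

Context {g : X -> X}.
Hypothesis g_cont : forall x, N x -> {for x, continuous g}.
Hypothesis g_L : forall x, L x -> ~ closure (N `\` L) (g x).

Lemma near_notin_closure {x} : N x -> ~ closure (N `\` L) (g x) ->
  \forall y \near x, ~ closure (N `\` L) (g y).
Proof.
move=> Nx notCgx.
by have := near_continuous_open (g_cont _ Nx) (closed_openC (@closed_closure _ _)) notCgx.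
Qed.

Lemma quot_lift_continuous :
  closed L -> (forall x, (N `\` L) x -> N (g x)) -> quot_continuous (quot_lift g).
Proof.
move=> closedL g_NL V [Q [oQ defQ]]; apply: subspace_open_of_nbhs => x Nx /= Vx.
have [Lx|nLx] := pselect (L x).
  have VL : V None by move: Vx; rewrite quot_lift_qmap_out // => -[].
  apply: filterS (near_notin_closure Nx (g_L _ Lx)) => y notCgy Ny /=.
  have [NLy|nNLy] := pselect ((N `\` L) y); last by rewrite quot_lift_qmap_out.
  by rewrite quot_lift_qmap_in // qmap_out_closure.
have NLx : (N `\` L) x by [].
rewrite quot_lift_qmap_in // in Vx.
have : (N `&` (p @^-1` V)) (g x) by split=> //; exact: g_NL.
rewrite defQ => -[_ Qgx].
have nbhs_nL : \forall y \near x, ~ L y.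
  by apply: open_nbhs_nbhs; split=> //; exact: closed_openC.
have nbhs_Q := near_continuous_open (g_cont _ Nx) oQ Qgx.
apply: filterS (filterI nbhs_nL nbhs_Q) => y [nLy Qgy] Ny /=.
have NLy : (N `\` L) y by [].
rewrite quot_lift_qmap_in //.
have : (N `&` Q) (g y) by split=> //; exact: g_NL.
by rewrite -defQ => -[].
Qed.

Lemma quot_lift_base_interior :
  quot_interior (quot_lift g @^-1` [set None]) None.
Proof.
pose W (q : quot N L) : Prop :=
  if q is Some x then ~ closure (N `\` L) (g (sval x)) else True.
exists W; split; last split=> //.
  apply: subspace_open_of_nbhs => x Nx /= Wpx.
  have notCgx : ~ closure (N `\` L) (g x).
    have [Lx|nLx] := pselect (L x); first exact: g_L.
    have NLx : (N `\` L) x by [].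
    by move: Wpx; rewrite (qmap_in NLx).
  apply: filterS (near_notin_closure Nx notCgx) => y notCgy Ny /=.
  have [NLy|nNLy] := pselect ((N `\` L) y); last by rewrite qmap_out.
  by rewrite (qmap_in NLy).
by case=> [[x NLx] /= notCgx|//]; rewrite /preimage /= qmap_out_closure.
Qed.

End QuotientMap.

Section FiltrationPair.
Context {R : realType} {X : metricType R}.
Context {U : set X} {f : X -> X} {S N L : set X}.
Hypothesis P : filtration_pair U f S N L.

Lemma filtration_pair_closed_L : closed L.
Proof.
by case: P => _ [_ [_ [_ [_ [<- _]]]]]; exact: closed_closure.
Qed.

Lemma filtration_pair_sub_U : N `<=` U.
Proof. by case: P => _ [_ [_ [NU _]]] x /NU /interior_subset. Qed.

Lemma filtration_pair_mapsto x : (N `\` L) x -> N (f x).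
Proof.
case: P => _ [_ [_ [_ [_ [_ [_ [_ [[E [_ [exitE ENL]] _]]]]]]]]] [Nx nLx].
apply: contrapT => nNfx; apply/nLx/ENL; split=> //.
by apply: exitE; split=> // /interior_subset.
Qed.

Lemma filtration_pair_L_off_closure x : L x -> ~ closure (N `\` L) (f x).
Proof.
case: P => _ [_ [_ [_ [_ [_ [_ [_ [_ disj]]]]]]]] Lx Cfx.
have : ((f @` L) `&` closure (N `\` L)) (f x) by split=> //; exists x.
by rewrite disj.
Qed.

End FiltrationPair.

Theorem mainTheorem4 (R : realType) (X : metricType R)
  (U : set X) (f : X -> X) (S N L : set X) :
  locally_compact [set: X] ->
  open U ->
  (forall x, U x -> {for x, continuous f}) ->
  isolated_invariant_set U f S ->
  filtration_pair U f S N L ->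
  (* well-definedness: p(f(x)) makes sense for x in N \ L *)
  (forall x, (N `\` L) x -> N (f x)) /\
  exists fP : quot N L -> quot N L,
    [/\ fP None = None,
        (forall x (hx : (N `\` L) x), fP (Some (exist _ x hx)) = qmap N L (f x)),
        quot_continuous fP &
        quot_interior (fP @^-1` [set None]) None].
Proof.
move=> _ _ f_cont _ P.
have f_cont_N x : N x -> {for x, continuous f}.
  by move=> /(filtration_pair_sub_U P); exact: f_cont.
have f_L := filtration_pair_L_off_closure P.
split; first exact: filtration_pair_mapsto P.
exists (quot_lift f); split=> //.
  apply: quot_lift_continuous f_cont_N f_L _ (filtration_pair_mapsto P).
  exact: filtration_pair_closed_L P.
exact: quot_lift_base_interior f_cont_N f_L.
Qed.
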